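(* (i) If $z_0=(x_0,y_0)$ with $y_0\ne0$ has a $\mathbf{W}$-orbit defined for all $k$ and converging to $p_0$, then there are constants $c,C>0$ such that $c|y_k|^2\le|y_{k+1}|\le C|y_k|^2$ for all $k$, where $z_k=(x_k,y_k)$; i.e. convergence is strictly quadratic. (ii) If $z_0\in R$ with $y_0\neq 0$ has a $\mathbf{W}$-orbit defined for all $k$ and converging to a point $(x_*,0)$ with $x_*\neq 2$, then there are constants $c,C>0$ such that $c|y_k|^3\le|y_{k+1}|\le C|y_k|^3$ for all $k$; i.e. convergence is strictly cubic.
   Context: For $x>0$, $y\in\mathbb{R}$ let $r_1^2=4+x^2+4x^2y^2$, $\Delta=((x+2)^2+8x^2y^2)((x-2)^2+8x^2y^2)$ and $\omega_\pm(x,y)=\frac{x^2-4\pm\sqrt{\Delta}}{2r_1^2}$. Let $p_0=(2,0)$, $R=\{(x,y): x>0,\ 4-4y^2-x^2y^2-8x^2y^4\ge 0\}$, $R_+=R\cap((0,2]\times\mathbb{R})$, $R_-=R\cap([2,\infty)\times\mathbb{R})$, $r$ the line $x=2$. $\mathbf{W}_\pm(x,y)=\left(\frac{1+\omega_\pm}{1-\omega_\pm}x,\ \frac{|\omega_\pm|}{1+\omega_\pm}y\right)$ on $R_\pm$; $\mathbf{W}=\mathbf{W}_+$ for $x<2$, $\mathbf{W}=\mathbf{W}_-$ for $x>2$, $\mathbf{W}(p_0)=p_0$. The $\mathbf{W}$-orbit of $z_0$ is $z_{k+1}=\mathbf{W}(z_k)$, defined as long as no $z_k$ lies on $r\setminus\{p_0\}$.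 *)

From Stdlib Require Import Reals.
From Coquelicot Require Import Coquelicot.
Open Scope R_scope.

Definition r1sq (x y : R) : R := 4 + x^2 + 4 * x^2 * y^2.

Definition Delta (x y : R) : R :=
  ((x + 2)^2 + 8 * x^2 * y^2) * ((x - 2)^2 + 8 * x^2 * y^2).

Definition omega_plus (x y : R) : R := (x^2 - 4 + sqrt (Delta x y)) / (2 * r1sq x y).
Definition omega_minus (x y : R) : R := (x^2 - 4 - sqrt (Delta x y)) / (2 * r1sq x y).

Definition p0 : R * R := (2, 0).

Definition inR (z : R * R) : Prop :=
  0 < fst z /\
  4 - 4 * (snd z)^2 - (fst z)^2 * (snd z)^2 - 8 * (fst z)^2 * (snd z)^4 >= 0.

Definition Wpm (w : R -> R -> R) (z : R * R) : R * R :=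
  let x := fst z in let y := snd z in
  ((1 + w x y) / (1 - w x y) * x, Rabs (w x y) / (1 + w x y) * y).

(* On the line x = 2 away from
   p0 W is undefined; we return the point itself there, but orbits are only
   considered when they never hit r \ {p0} (see [orbit_defined]). *)
Definition W (z : R * R) : R * R :=
  if Rlt_dec (fst z) 2 then Wpm omega_plus z
  else if Rlt_dec 2 (fst z) then Wpm omega_minus z
  else z.

Definition orbit_defined (z : nat -> R * R) : Prop :=
  forall k, inR (z k) /\ (fst (z k) <> 2 \/ z k = p0) /\ z (S k) = W (z k).

(* At a point (x, y) with x <> 2 and y <> 0, W is (x, y) |-> ((1+w)/(1-w) x, |w|/(1+w) y),
   where w = omega_+ or omega_- is the root, of sign opposite to x - 2, of
   r1^2 w^2 - (x^2-4) w - 4 x^2 y^2 = 0; equivalently |w| (r1^2 |w| + |x^2-4|) = 4 x^2 y^2.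
   Near (x*, 0) with x* <> 2 the term |x^2-4| is bounded below, so |w| ~ y^2 and |y'| ~ |y|^3
   (and x* > 0, because x increases while it stays below 2).  Near p0 the relation gives
   |w| ~ |y|, hence |y'| ~ |y|^2, as soon as |x^2-4| = O(|y|).  This holds eventually: once
   |x^2-4| >= 2000 |y| the gap |x^2-4| - |y| can only grow along the orbit, which is
   incompatible with convergence to p0.  Finitely many initial steps only change the
   constants. *)

From Pilot Require Import Defs.
From Stdlib Require Import Reals Lra Lia Psatz.
From Coquelicot Require Import Coquelicot.
Open Scope R_scope.

Lemma r1sq_pos x y : 0 < r1sq x y.
Proof. unfold r1sq; nra. Qed.

Lemma Delta_eq x y : Defs.Delta x y = (x^2-4)^2 + 4 * r1sq x y * (4*x^2*y^2).
Proof. unfold Defs.Delta, r1sq; ring. Qed.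

Lemma quadratic_formula_root (a b c s w : R) :
  a <> 0 -> 0 <= b^2 + 4*a*c -> s * s = 1 ->
  w = (b + s * sqrt (b^2 + 4*a*c)) / (2*a) -> w * (a*w - b) = c.
Proof.
intros ha hd hs ->.
set (S := sqrt (b^2 + 4*a*c)).
assert (hSS : S * S = b^2 + 4*a*c) by (apply sqrt_sqrt; exact hd).
field_simplify; [|exact ha].
replace (s^2 * S^2) with ((s*s) * (S*S)) by ring.
rewrite hs, hSS. field. exact ha.
Qed.

Lemma Rabs_lt_sqrt_Delta x y : x <> 0 -> y <> 0 -> Rabs (x^2-4) < sqrt (Defs.Delta x y).
Proof.
intros hx hy.
rewrite <- sqrt_Rsqr_abs, Delta_eq.
apply sqrt_lt_1_alt; split; [apply Rle_0_sqr|].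
assert (0 < x^2*y^2) by (apply Rmult_lt_0_compat; apply pow2_gt_0; assumption).
pose proof (r1sq_pos x y). unfold Rsqr. nra.
Qed.

Lemma omega_plus_root x y :
  omega_plus x y * (r1sq x y * omega_plus x y - (x^2-4)) = 4*x^2*y^2.
Proof.
pose proof (r1sq_pos x y).
apply (quadratic_formula_root _ _ _ 1); [lra| |lra|].
- pose proof (Rle_0_sqr (x^2-4)). assert (0 <= x^2*y^2) by (apply Rmult_le_pos; apply pow2_ge_0).
  unfold Rsqr in *; nra.
- unfold omega_plus. rewrite Delta_eq. f_equal. ring.
Qed.

Lemma omega_minus_root x y :
  omega_minus x y * (r1sq x y * omega_minus x y - (x^2-4)) = 4*x^2*y^2.
Proof.
pose proof (r1sq_pos x y).
apply (quadratic_formula_root _ _ _ (-1)); [lra| |lra|].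
- pose proof (Rle_0_sqr (x^2-4)). assert (0 <= x^2*y^2) by (apply Rmult_le_pos; apply pow2_ge_0).
  unfold Rsqr in *; nra.
- unfold omega_minus. rewrite Delta_eq. f_equal. ring.
Qed.

Lemma omega_plus_pos x y : x <> 0 -> y <> 0 -> 0 < omega_plus x y.
Proof.
intros hx hy. pose proof (Rabs_lt_sqrt_Delta x y hx hy). pose proof (Rle_abs (-(x^2-4))).
rewrite Rabs_Ropp in *. apply Rdiv_lt_0_compat; [lra|]. pose proof (r1sq_pos x y); lra.
Qed.

Lemma omega_minus_neg x y : x <> 0 -> y <> 0 -> omega_minus x y < 0.
Proof.
intros hx hy. pose proof (Rabs_lt_sqrt_Delta x y hx hy). pose proof (Rle_abs (x^2-4)).
pose proof (r1sq_pos x y).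
assert (0 < (sqrt (Defs.Delta x y) - (x^2-4)) / (2 * r1sq x y)) by (apply Rdiv_lt_0_compat; lra).
replace (omega_minus x y) with (- ((sqrt (Defs.Delta x y) - (x^2-4)) / (2 * r1sq x y)))
  by (unfold omega_minus; field; lra).
lra.
Qed.

Lemma W_step x y : 0 < x -> x <> 2 -> y <> 0 ->
  exists w, W (x, y) = ((1+w)/(1-w)*x, Rabs w/(1+w)*y) /\
    w * (r1sq x y * w - (x^2-4)) = 4*x^2*y^2 /\ w * (x-2) < 0.
Proof.
intros hx h2 hy. unfold W; simpl fst.
destruct (Rlt_dec x 2) as [hlt|hge].
- exists (omega_plus x y). split; [reflexivity|]. split; [apply omega_plus_root|].
  pose proof (omega_plus_pos x y ltac:(lra) hy). nra.
- destruct (Rlt_dec 2 x) as [hgt|]; [|lra].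
  exists (omega_minus x y). split; [reflexivity|]. split; [apply omega_minus_root|].
  pose proof (omega_minus_neg x y ltac:(lra) hy). nra.
Qed.

Lemma ratio_pos_range w : 0 < (1+w)/(1-w) -> -1 < w < 1.
Proof.
intro h. destruct (Req_dec (1-w) 0) as [e|e].
- rewrite e, Rdiv_0_r in h. lra.
- assert (h2 : (1+w)/(1-w) * (1-w) = 1+w) by (field; exact e). nra.
Qed.

(* The step of W in the coordinates (x, |y|), with multiplier w; the last conjunct is the
   root equation of omega_+- with r1^2 expressed through |y|. *)
Definition W_abs_step (x Y w x' Y' : R) : Prop :=
  -1 < w < 1 /\ w * (x-2) < 0 /\
  x' = (1+w)/(1-w)*x /\ Y' = Rabs w * Y / (1+w) /\
  Rabs w * ((4 + x^2 + 4*x^2*Y^2) * Rabs w + Rabs (x^2-4)) = 4*x^2*Y^2.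

Lemma W_abs_step_of_W x y x' y' : 0 < x -> x <> 2 -> y <> 0 -> 0 < x' ->
  W (x, y) = (x', y') -> exists w, W_abs_step x (Rabs y) w x' (Rabs y').
Proof.
intros hx h2 hy hx' hW.
destruct (W_step x y hx h2 hy) as [w [hWw [hroot hsign]]].
rewrite hW in hWw. injection hWw as ex ey.
assert (hw : -1 < w < 1).
{ apply ratio_pos_range. rewrite ex in hx'. apply (Rmult_lt_reg_r x); lra. }
exists w. repeat split; try tauto.
- rewrite ey, Rabs_mult, Rabs_div, Rabs_Rabsolu, (Rabs_right (1+w)) by lra. field. lra.
- assert (hneg : w * (x^2-4) < 0) by (replace (w*(x^2-4)) with (w*(x-2)*(x+2)) by ring; nra).
  assert (habs : Rabs w * Rabs (x^2-4) = - (w * (x^2-4)))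
    by (rewrite <- Rabs_mult; apply Rabs_left; exact hneg).
  rewrite pow2_abs. transitivity (w * (r1sq x y * w - (x^2-4))); [|exact hroot].
  unfold r1sq. replace (Rabs w * ((4 + x^2 + 4*x^2*y^2) * Rabs w + Rabs (x^2-4)))
    with ((4 + x^2 + 4*x^2*y^2) * Rabs w ^ 2 + Rabs w * Rabs (x^2-4)) by ring.
  rewrite habs, pow2_abs. ring.
Qed.

Lemma W_abs_step_snd_pos x Y w x' Y' : W_abs_step x Y w x' Y' -> 0 < Y -> 0 < Y'.
Proof.
intros (hw & hsign & _ & -> & _) hY.
assert (0 < Rabs w) by (apply Rabs_pos_lt; intros ->; lra).
apply Rdiv_lt_0_compat; [apply Rmult_lt_0_compat|]; lra.
Qed.

Lemma W_abs_step_fst_le x Y w x' Y' : W_abs_step x Y w x' Y' -> 0 < x < 2 -> x <= x'.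
Proof.
intros (hw & hsign & -> & _) hx.
assert (0 < w) by nra.
assert (0 <= 2*w*x/(1-w)) by (apply Rlt_le, Rdiv_lt_0_compat; nra).
replace ((1+w)/(1-w)*x) with (x + 2*w*x/(1-w)) by (field; lra). lra.
Qed.

Lemma W_abs_step_quadratic x Y w x' Y' : W_abs_step x Y w x' Y' ->
  199/100 < x < 201/100 -> 0 < Y < 1/100 -> Rabs (x^2-4) < 2000*Y ->
  Y^2/200 <= Y' <= 3*Y^2.
Proof.
intros (hw & _ & _ & -> & hE) hx hY hA.
set (a := Rabs w) in *. set (r := 4 + x^2 + 4*x^2*Y^2) in *. set (A := Rabs (x^2-4)) in *.
assert (ha0 : 0 <= a) by apply Rabs_pos.
assert (hA0 : 0 <= A) by apply Rabs_pos.
assert (hwa : -a <= w <= a) by (apply Rabs_le_between, Rle_refl).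
assert (hx2 : 39/10 < x^2 < 41/10) by (split; nra).
assert (hr : 4 <= r <= 9) by (unfold r; split; nra).
assert (hup : r*a*a <= 4*x^2*Y^2) by nra.
assert (ha1 : a <= 21/10*Y) by nra.
assert (hra : r*a <= 19*Y) by nra.
assert (hlo : 4*x^2*Y^2 <= a*(2019*Y)) by nra.
assert (ha2 : Y <= 136*a).
{ apply (Rmult_le_reg_r Y); [lra|]. nra. }
split.
- apply (Rle_div_r (Y^2/200) (a*Y) (1+w)); [lra|].
  assert (Y * w <= Y * a) by (apply Rmult_le_compat_l; lra).
  assert (Y * a <= a / 100) by nra.
  assert (Y * (1+w) <= 200*a) by lra. nra.
- apply (Rle_div_l (a*Y) (3*Y^2) (1+w)); [lra|].
  assert (a * Y <= 21/10 * Y^2) by nra.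
  assert (- (Y^2 * a) <= Y^2 * w) by nra.
  assert (Y^2 * a <= Y^2 / 10) by nra. nra.
Qed.

(* When |x^2-4| >= 2000 Y the multiplier is at most 17 Y / 2000, so x moves towards 2 by much
   less than Y decreases. *)
Lemma trap_below_two (x Y w r : R) : 199/100 < x < 2 -> 0 < Y < 1/100 -> 0 < w < 1 -> 0 < r ->
  w*(r*w + (4-x^2)) = 4*x^2*Y^2 -> 2000*Y <= 4 - x^2 ->
  let x' := (1+w)/(1-w)*x in let Y' := w*Y/(1+w) in
  x' < 2 /\ 2000*Y' <= 4 - x'^2 /\ (4-x^2) - Y <= (4 - x'^2) - Y'.
Proof.
intros hx hY hw hr hE hA x' Y'.
assert (hrw : 0 <= r*w*w) by (apply Rmult_le_pos; [apply Rmult_le_pos|]; lra).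
assert (h1 : w*(4-x^2) <= 4*x^2*Y^2) by nra.
assert (hx2 : x^2 < 41/10) by nra.
assert (hY2 : 4*x^2*Y^2 <= 17*Y*Y) by nra.
assert (hw2 : w*2000 <= 17*Y) by (apply (Rmult_le_reg_r Y); nra).
set (d := x' - x).
assert (hd : d*(1-w) = 2*w*x) by (unfold d, x'; field; lra).
assert (hd1 : 0 <= d <= 41/10*w) by (split; nra).
assert (hYw : Y'*(1+w) = w*Y) by (unfold Y'; field; lra).
assert (hY' : 0 <= Y' <= w*Y) by nra.
replace x' with (x + d) by (unfold d; ring).
split; [nra|]. split; nra.
Qed.

Lemma trap_above_two (x Y v r : R) : 2 < x < 201/100 -> 0 < Y < 1/100 -> 0 < v < 1 -> 0 < r ->
  v*(r*v + (x^2-4)) = 4*x^2*Y^2 -> 2000*Y <= x^2 - 4 ->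
  let x' := (1-v)/(1+v)*x in let Y' := v*Y/(1-v) in
  2 < x' /\ 2000*Y' <= x'^2 - 4 /\ (x^2-4) - Y <= (x'^2 - 4) - Y'.
Proof.
intros hx hY hv hr hE hA x' Y'.
assert (hrv : 0 <= r*v*v) by (apply Rmult_le_pos; [apply Rmult_le_pos|]; lra).
assert (h1 : v*(x^2-4) <= 4*x^2*Y^2) by nra.
assert (hx2 : x^2 < 41/10) by nra.
assert (hY2 : 4*x^2*Y^2 <= 17*Y*Y) by nra.
assert (hv2 : v*2000 <= 17*Y) by (apply (Rmult_le_reg_r Y); nra).
set (d := x - x').
assert (hd : d*(1+v) = 2*v*x) by (unfold d, x'; field; lra).
assert (hd1 : 0 <= d <= 41/10*v) by (split; nra).
assert (hYv : Y'*(1-v) = v*Y) by (unfold Y'; field; lra).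
assert (hY' : 0 <= Y' <= 2*v*Y) by nra.
replace x' with (x - d) by (unfold d; ring).
split; [nra|]. split; nra.
Qed.

Lemma W_abs_step_trap x Y w x' Y' : W_abs_step x Y w x' Y' ->
  199/100 < x < 201/100 -> 0 < Y < 1/100 -> 2000*Y <= Rabs (x^2-4) ->
  2000*Y' <= Rabs (x'^2-4) /\ Rabs (x^2-4) - Y <= Rabs (x'^2-4) - Y'.
Proof.
intros (hw & hsign & -> & -> & hE) hx hY hA.
assert (hr : 0 < 4 + x^2 + 4*x^2*Y^2) by nra.
destruct (Rlt_dec x 2) as [hlt|hge].
- assert (hw0 : 0 < w) by nra.
  rewrite Rabs_right in * by lra. rewrite Rabs_left in hA, hE by nra.
  assert (hE' : w * ((4 + x^2 + 4*x^2*Y^2) * w + (4 - x^2)) = 4*x^2*Y^2)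
    by (etransitivity; [|exact hE]; ring).
  destruct (trap_below_two x Y w _ ltac:(lra) hY ltac:(lra) hr hE' ltac:(lra)) as (hx' & h1 & h2).
  assert (0 < (1+w)/(1-w)*x) by (apply Rmult_lt_0_compat; [apply Rdiv_lt_0_compat|]; lra).
  rewrite !Rabs_left by nra. lra.
- assert (hw0 : w < 0) by nra. assert (hgt : 2 < x) by nra.
  rewrite Rabs_left in * by lra. rewrite Rabs_right in hA, hE by nra.
  assert (hE' : -w * ((4 + x^2 + 4*x^2*Y^2) * -w + (x^2 - 4)) = 4*x^2*Y^2)
    by (etransitivity; [|exact hE]; ring).
  destruct (trap_above_two x Y (-w) _ ltac:(lra) hY ltac:(lra) hr hE' ltac:(lra))
    as (hx' & h1 & h2).
  replace ((1+w)/(1-w)*x) with ((1 - -w)/(1 + -w)*x) by (field; lra).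
  replace (-w*Y/(1+w)) with (-w*Y/(1 - -w)) by (field; lra).
  rewrite !Rabs_right by nra. lra.
Qed.

Lemma W_abs_step_cubic x Y w x' Y' a b g : W_abs_step x Y w x' Y' ->
  0 < a <= x -> x <= b -> 0 < Y <= 1 -> 0 < g <= Rabs (x^2-4) -> 8*b^2*Y^2 <= g ->
  a^2/(4*(1+b^2))*Y^3 <= Y' <= 8*b^2/g*Y^3.
Proof.
intros (hw & _ & _ & -> & hE) hax hxb hY hg hbY.
set (e := Rabs w) in *. set (r := 4 + x^2 + 4*x^2*Y^2) in *. set (A := Rabs (x^2-4)) in *.
assert (he0 : 0 <= e) by apply Rabs_pos.
assert (hwe : -e <= w <= e) by (apply Rabs_le_between, Rle_refl).
assert (hx2 : a^2 <= x^2 <= b^2) by (split; nra).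
assert (hY2 : Y^2 <= 1) by nra.
assert (hA : A <= b^2 + 4) by (unfold A; apply Rabs_le; nra).
assert (hr : 0 <= r <= 4 + 5*b^2) by (unfold r; split; nra).
assert (hreg : 0 <= r*e*e) by (apply Rmult_le_pos; [apply Rmult_le_pos|]; lra).
assert (heg : e*g <= 4*b^2*Y^2) by nra.
assert (he1 : e <= 1/2) by nra.
assert (hrA : r*e + A <= 6*(1+b^2)) by nra.
assert (helo : 2*a^2*Y^2 <= 3*(1+b^2)*e) by nra.
split.
- set (q := a^2/(4*(1+b^2))).
  assert (hq : 0 <= q) by (unfold q; apply Rmult_le_pos; [nra|apply Rlt_le, Rinv_0_lt_compat; nra]).
  assert (heq : 8*q*Y^2 <= 3*e).
  { apply (Rmult_le_reg_r (1+b^2)); [nra|].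
    replace (8*q*Y^2*(1+b^2)) with (2*a^2*Y^2) by (unfold q; field; nra). lra. }
  apply (Rle_div_r (q*Y^3) (e*Y) (1+w)); [lra|].
  assert (0 <= q*Y^3) by (apply Rmult_le_pos; [lra|apply pow_le; lra]). nra.
- set (p := b^2/g).
  assert (hp : 0 <= p) by (unfold p; apply Rmult_le_pos; [nra|apply Rlt_le, Rinv_0_lt_compat; lra]).
  assert (hep : e <= 4*p*Y^2).
  { apply (Rmult_le_reg_r g); [lra|].
    replace (4*p*Y^2*g) with (4*b^2*Y^2) by (unfold p; field; lra). lra. }
  replace (8*b^2/g) with (8*p) by (unfold p; field; lra).
  apply (Rle_div_l (e*Y) (8*p*Y^3) (1+w)); [lra|].
  assert (0 <= p*Y^3) by (apply Rmult_le_pos; [lra|apply pow_le; lra]).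
  assert (e*Y <= 4*p*Y^3) by nra. nra.
Qed.

Lemma filterlim_pair_close (z : nat -> R * R) (p : R * R) (eps : R) :
  filterlim z eventually (locally p) -> 0 < eps ->
  exists N, forall k, (N <= k)%nat ->
    Rabs (fst (z k) - fst p) < eps /\ Rabs (snd (z k) - snd p) < eps.
Proof.
intros hlim heps.
destruct (hlim _ (locally_ball p (mkposreal eps heps))) as [N HN].
exists N. intros k hk. exact (HN k hk).
Qed.

Lemma power_bounds_from_eventually (Y : nat -> R) (n N : nat) (c1 C1 : R) :
  0 < c1 -> 0 < C1 -> (forall k, 0 < Y k) ->
  (forall k, (N <= k)%nat -> c1 * Y k ^ n <= Y (S k) <= C1 * Y k ^ n) ->
  exists c C, 0 < c /\ 0 < C /\ forall k, c * Y k ^ n <= Y (S k) <= C * Y k ^ n.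
Proof.
revert c1 C1. induction N as [|N IH]; intros c1 C1 hc hC hY H.
- exists c1, C1. repeat split; auto; apply H; lia.
- assert (hp : 0 < Y N ^ n) by (apply pow_lt; auto).
  set (q := Y (S N) / Y N ^ n).
  assert (hq : 0 < q) by (apply Rdiv_lt_0_compat; auto).
  assert (hqe : q * Y N ^ n = Y (S N)) by (unfold q; field; lra).
  apply (IH (Rmin c1 q) (Rmax C1 q)).
  + apply Rmin_glb_lt; auto.
  + apply Rlt_le_trans with C1; [auto|apply Rmax_l].
  + auto.
  + intros k hk. assert (0 < Y k ^ n) by (apply pow_lt; auto).
    destruct (Nat.eq_dec k N) as [->|hkN].
    * rewrite <- hqe. split; apply Rmult_le_compat_r; try lra; [apply Rmin_r|apply Rmax_r].
    * destruct (H k ltac:(lia)) as [h1 h2]. split.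
      -- apply Rle_trans with (c1 * Y k ^ n); [apply Rmult_le_compat_r; [lra|apply Rmin_l]|auto].
      -- apply Rle_trans with (C1 * Y k ^ n); [auto|apply Rmult_le_compat_r; [lra|apply Rmax_l]].
Qed.

Section Orbit.

Variable z : nat -> R * R.
Hypothesis orbit : orbit_defined z.

Lemma orbit_fst_pos k : 0 < fst (z k).
Proof. apply (orbit k). Qed.

Lemma orbit_step_of_snd k : snd (z k) <> 0 ->
  exists w, W_abs_step (fst (z k)) (Rabs (snd (z k))) w (fst (z (S k))) (Rabs (snd (z (S k)))).
Proof.
intros hy. destruct (orbit k) as (_ & h2 & hS).
apply W_abs_step_of_W; [apply orbit_fst_pos| |exact hy|apply orbit_fst_pos|].
- destruct h2 as [h2|h2]; [exact h2|]. rewrite h2 in hy. contradiction.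
- rewrite <- !surjective_pairing. symmetry. exact hS.
Qed.

Hypothesis snd_z0 : snd (z 0%nat) <> 0.

Lemma orbit_snd_pos k : 0 < Rabs (snd (z k)).
Proof.
induction k as [|k IH]; [apply Rabs_pos_lt, snd_z0|].
assert (hy : snd (z k) <> 0) by (intro e; rewrite e, Rabs_R0 in IH; lra).
destruct (orbit_step_of_snd k hy) as [w hw].
exact (W_abs_step_snd_pos _ _ _ _ _ hw IH).
Qed.

Lemma orbit_step k :
  exists w, W_abs_step (fst (z k)) (Rabs (snd (z k))) w (fst (z (S k))) (Rabs (snd (z (S k)))).
Proof.
apply orbit_step_of_snd. intro e. pose proof (orbit_snd_pos k) as h.
rewrite e, Rabs_R0 in h. lra.
Qed.

Section Quadratic.

Hypothesis lim : filterlim z eventually (locally p0).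

Lemma orbit_near_p0 : exists N, forall k, (N <= k)%nat ->
  199/100 < fst (z k) < 201/100 /\ Rabs (snd (z k)) < 1/100.
Proof.
destruct (filterlim_pair_close z p0 (1/100) lim ltac:(lra)) as [N hN].
exists N. intros k hk. destruct (hN k hk) as [hx hy]. simpl in hx, hy.
rewrite Rminus_0_r in hy. apply Rabs_def2 in hx. split; [lra|exact hy].
Qed.

Lemma orbit_trapped k :
  (forall j, (k <= j)%nat -> 199/100 < fst (z j) < 201/100 /\ Rabs (snd (z j)) < 1/100) ->
  2000 * Rabs (snd (z k)) <= Rabs (fst (z k)^2 - 4) ->
  forall j, (k <= j)%nat ->
    Rabs (fst (z k)^2 - 4) - Rabs (snd (z k)) <= Rabs (fst (z j)^2 - 4) - Rabs (snd (z j)).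
Proof.
intros hnear htrap j hj.
enough (2000 * Rabs (snd (z j)) <= Rabs (fst (z j)^2 - 4) /\
        Rabs (fst (z k)^2 - 4) - Rabs (snd (z k)) <= Rabs (fst (z j)^2 - 4) - Rabs (snd (z j)))
  by tauto.
induction hj as [|j hj [IH1 IH2]]; [lra|].
destruct (orbit_step j) as [w hw].
destruct (hnear j hj) as [hx hy].
destruct (W_abs_step_trap _ _ _ _ _ hw hx (conj (orbit_snd_pos j) hy) IH1) as [h1 h2].
split; lra.
Qed.

Lemma orbit_eventually_untrapped : exists N, forall k, (N <= k)%nat ->
  199/100 < fst (z k) < 201/100 /\ Rabs (snd (z k)) < 1/100 /\
  Rabs (fst (z k)^2 - 4) < 2000 * Rabs (snd (z k)).
Proof.
destruct orbit_near_p0 as [N hN].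
exists N. intros k hk. split; [apply hN, hk|].
destruct (Rlt_le_dec (Rabs (fst (z k)^2 - 4)) (2000 * Rabs (snd (z k)))) as [h|htrap];
  [split; [apply hN, hk|exact h]|exfalso].
set (G := Rabs (fst (z k)^2 - 4) - Rabs (snd (z k))).
assert (hG : 0 < G) by (pose proof (orbit_snd_pos k); unfold G; lra).
destruct (filterlim_pair_close z p0 (G/10) lim ltac:(lra)) as [M hM].
set (j := (M + k)%nat).
destruct (hM j ltac:(lia)) as [hx _]. simpl in hx.
destruct (hN j ltac:(lia)) as [hxj _].
pose proof (orbit_trapped k (fun i hi => hN i ltac:(lia)) htrap j ltac:(lia)) as hgap.
fold G in hgap.
assert (Rabs (fst (z j)^2 - 4) <= G/2).
{ replace (fst (z j)^2 - 4) with ((fst (z j) - 2) * (fst (z j) + 2)) by ring.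
  rewrite Rabs_mult, (Rabs_right (fst (z j) + 2)) by lra.
  apply Rle_trans with (G/10 * 5); [apply Rmult_le_compat; [apply Rabs_pos|lra|lra|lra]|lra]. }
pose proof (Rabs_pos (snd (z j))). lra.
Qed.

Lemma orbit_quadratic : exists c C, 0 < c /\ 0 < C /\ forall k,
  c * Rabs (snd (z k)) ^ 2 <= Rabs (snd (z (S k))) <= C * Rabs (snd (z k)) ^ 2.
Proof.
destruct orbit_eventually_untrapped as [N hN].
apply (power_bounds_from_eventually (fun k => Rabs (snd (z k))) 2 N (1/200) 3);
  [lra|lra|exact orbit_snd_pos|].
intros k hk. destruct (hN k hk) as (hx & hy & hA). destruct (orbit_step k) as [w hw].
pose proof (W_abs_step_quadratic _ _ _ _ _ hw hx (conj (orbit_snd_pos k) hy) hA). simpl. lra.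
Qed.

End Quadratic.

Section Cubic.

Variable xs : R.
Hypothesis xs_neq_2 : xs <> 2.
Hypothesis lim : filterlim z eventually (locally (xs, 0)).

Lemma orbit_limit_fst_pos : 0 < xs.
Proof.
destruct (Rlt_le_dec 0 xs) as [h|hxs]; [exact h|exfalso].
destruct (filterlim_pair_close z (xs, 0) 1 lim ltac:(lra)) as [N hN].
assert (hmono : forall j, (N <= j)%nat -> fst (z N) <= fst (z j)).
{ intros j hj. induction hj as [|j hj IH]; [lra|].
  destruct (orbit_step j) as [w hw].
  destruct (hN j hj) as [hx _]. apply Rabs_def2 in hx. simpl in hx.
  pose proof (W_abs_step_fst_le _ _ _ _ _ hw ltac:(split; [apply orbit_fst_pos|lra])). lra. }
destruct (filterlim_pair_close z (xs, 0) _ lim (orbit_fst_pos N)) as [M hM].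
destruct (hM (M + N)%nat ltac:(lia)) as [hx _]. apply Rabs_def2 in hx. simpl in hx.
pose proof (hmono (M + N)%nat ltac:(lia)). lra.
Qed.

Lemma orbit_near_limit : exists N, forall k, (N <= k)%nat ->
  xs/2 <= fst (z k) <= xs + 1 /\ 0 < Rabs (snd (z k)) <= 1 /\
  Rabs (xs - 2) <= Rabs (fst (z k)^2 - 4) /\
  8 * (xs + 1)^2 * Rabs (snd (z k))^2 <= Rabs (xs - 2).
Proof.
pose proof orbit_limit_fst_pos as hxs.
set (g := Rabs (xs - 2)). set (b := xs + 1).
assert (hg : 0 < g) by (apply Rabs_pos_lt; lra).
assert (hb : 0 < 8*b^2) by (unfold b; nra).
set (eps := Rmin (Rmin 1 (xs/2)) (g/(8*b^2))).
assert (heps : 0 < eps) by (repeat apply Rmin_glb_lt; try lra; apply Rdiv_lt_0_compat; lra).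
assert (he1 : eps <= 1) by (eapply Rle_trans; [apply Rmin_l|apply Rmin_l]).
assert (he2 : eps <= xs/2) by (eapply Rle_trans; [apply Rmin_l|apply Rmin_r]).
assert (he3 : eps * (8*b^2) <= g) by (apply Rle_div_r; [lra|apply Rmin_r]).
assert (he4 : eps <= g/2) by (assert (1 <= b^2) by (unfold b; nra); nra).
destruct (filterlim_pair_close z (xs, 0) eps lim heps) as [N hN].
exists N. intros k hk.
destruct (hN k hk) as [hx hy]. simpl in hx, hy. rewrite Rminus_0_r in hy.
set (x := fst (z k)) in *. set (Y := Rabs (snd (z k))) in *.
pose proof (orbit_snd_pos k) as hY. fold Y in hY.
apply Rabs_def2 in hx.
assert (hx2 : g/2 <= Rabs (x - 2)).
{ pose proof (Rabs_triang (xs - x) (x - 2)) as ht.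
  replace (xs - x + (x - 2)) with (xs - 2) in ht by ring.
  assert (Rabs (xs - x) < eps) by (apply Rabs_def1; lra). fold g in ht. lra. }
split; [unfold b; lra|]. split; [lra|]. split.
- replace (x^2 - 4) with ((x - 2) * (x + 2)) by ring.
  rewrite Rabs_mult, (Rabs_right (x + 2)) by lra. nra.
- assert (Y^2 <= eps) by nra. fold b. nra.
Qed.

Lemma orbit_cubic : exists c C, 0 < c /\ 0 < C /\ forall k,
  c * Rabs (snd (z k)) ^ 3 <= Rabs (snd (z (S k))) <= C * Rabs (snd (z k)) ^ 3.
Proof.
pose proof orbit_limit_fst_pos as hxs.
assert (hg : 0 < Rabs (xs - 2)) by (apply Rabs_pos_lt; lra).
destruct orbit_near_limit as [N hN].
apply (power_bounds_from_eventually (fun k => Rabs (snd (z k))) 3 N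
         ((xs/2)^2 / (4*(1 + (xs+1)^2))) (8*(xs+1)^2 / Rabs (xs - 2)));
  [apply Rdiv_lt_0_compat; nra|apply Rdiv_lt_0_compat; nra|exact orbit_snd_pos|].
intros k hk. destruct (hN k hk) as (hx & hy & hA & hsmall). destruct (orbit_step k) as [w hw].
exact (W_abs_step_cubic _ _ _ _ _ (xs/2) (xs+1) _ hw ltac:(lra) ltac:(lra) hy (conj hg hA) hsmall).
Qed.

End Cubic.

End Orbit.

Theorem proposition5p5 :
  (forall z : nat -> R * R,
     snd (z 0%nat) <> 0 ->
     orbit_defined z ->
     filterlim z eventually (locally p0) ->
     exists c C : R, 0 < c /\ 0 < C /\
       forall k : nat,
         c * (Rabs (snd (z k)))^2 <= Rabs (snd (z (S k))) /\
         Rabs (snd (z (S k))) <= C * (Rabs (snd (z k)))^2)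
  /\
  (forall (z : nat -> R * R) (xs : R),
     inR (z 0%nat) ->
     snd (z 0%nat) <> 0 ->
     orbit_defined z ->
     xs <> 2 ->
     filterlim z eventually (locally (xs, 0)) ->
     exists c C : R, 0 < c /\ 0 < C /\
       forall k : nat,
         c * (Rabs (snd (z k)))^3 <= Rabs (snd (z (S k))) /\
         Rabs (snd (z (S k))) <= C * (Rabs (snd (z k)))^3).
Proof.
split.
- intros z hy0 horbit hlim. exact (orbit_quadratic z horbit hy0 hlim).
- intros z xs _ hy0 horbit hxs hlim. exact (orbit_cubic z horbit hy0 xs hxs hlim).
Qed.
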